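(* For every sequence $a\in\mathcal{A}$: if $a$ is a member of the Catalan family $\mathcal{C}$ then $\delta a=a$; otherwise $a<\delta a$ in the lexicographic order (on sequences of the same length).
   Context: $\mathcal{A}$ is the set of finite integer sequences $a=(a_0,\dots,a_n)$ (any $n\ge0$) with $0\le a_i\le i$ for all $i$; $\mathcal{A}_n$ denotes those of length $n+1$. The map $\delta:\mathcal{A}\to\mathcal{A}$ is defined by $(\delta a)_i=\#\{j: j<i,\ a_j<a_i\}$ (it preserves length). Lexicographic order on $\mathcal{A}_n$: $a<b$ iff $a_i<b_i$ at the first index where they differ. The Catalan family $\mathcal{C}\subseteq\mathcal{A}$ is defined recursively together with, for each member $a$, a ''sibling list'' $L(a)$, a finite strictly increasing list of integers: $(0)\in\mathcal{C}$ with $L((0))=(0)$. If $a=(a_0,\dots,a_n)\in\mathcal{C}$ with $L(a)=(s_0,s_1,\dots,s_m)$ and $a_n=s_i$, then the children of $a$ are the sequences $(a_0,\dots,a_n,t)$ for $t\in\{s_0,s_1,\dots,s_i,n+1\}$; all of them belong to $\mathcal{C}$ and each has sibling list $(s_0,\dots,s_i,n+1)$. $\mathcal{C}$ consists exactly of the sequences obtained this way. (Thus e.g. generation 1 members are $(0,0),(0,1)$; generation 2 members are $(0,0,0),(0,0,2),(0,1,0),(0,1,1),(0,1,2)$.) *)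

From mathcomp Require Import all_boot.
Set Implicit Arguments. Unset Strict Implicit. Unset Printing Implicit Defensive.

(* Sequences a = (a_0,...,a_n) represented as [seq nat], a_i = nth 0 a i. *)

Definition inA (a : seq nat) : Prop :=
  0 < size a /\ forall i, i < size a -> nth 0 a i <= i.

Definition delta (a : seq nat) : seq nat :=
  [seq count (fun j => nth 0 a j < nth 0 a i) (iota 0 i) | i <- iota 0 (size a)].

Definition lex_lt (a b : seq nat) : Prop :=
  size a = size b /\
  exists k, k < size a /\ (forall j, j < k -> nth 0 a j = nth 0 b j)
            /\ nth 0 a k < nth 0 b k.

(* The Catalan family together with sibling lists: CatL a L means a is in C
   with sibling list L. *)
Inductive CatL : seq nat -> seq nat -> Prop :=
| CatL0 : CatL [:: 0] [:: 0]
| CatLS (a L : seq nat) (i t : nat) :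
    CatL a L ->
    i < size L ->
    last 0 a = nth 0 L i ->
    t \in rcons (take i.+1 L) (size a) ->
    CatL (rcons a t) (rcons (take i.+1 L) (size a)).

Definition inC (a : seq nat) : Prop := exists L, CatL a L.

From mathcomp Require Import all_boot zify.

Set Implicit Arguments.
Unset Strict Implicit.
Unset Printing Implicit Defensive.

(* For j < a_m we have a_j <= j < a_m, so every such index is counted by
   (delta a)_m; hence (delta a)_m = a_m + #{a_m <= j < m | a_j < a_m} >= a_m,
   with equality exactly when a_m is "good": a_j >= a_m on [a_m, m).  The
   Catalan sequences are precisely those that are good at every index, since
   the sibling list of a consists of the values that may be appended to a
   without breaking goodness.  Both claims follow, the second by looking at
   the first bad index. *)

Definition good_at (a : seq nat) m : bool :=
  all (fun j => nth 0 a m <= nth 0 a j) (iota (nth 0 a m) (m - nth 0 a m)).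

Lemma good_atP a m :
  reflect (forall j, nth 0 a m <= j -> j < m -> nth 0 a m <= nth 0 a j)
          (good_at a m).
Proof.
apply: (iffP allP) => H j.
- by move=> h1 h2; apply: H; rewrite mem_iota; lia.
- by rewrite mem_iota => h; apply: H; lia.
Qed.

Lemma size_delta a : size (delta a) = size a.
Proof. by rewrite size_map size_iota. Qed.

Lemma nth_delta a m : m < size a ->
  nth 0 (delta a) m = count (fun j => nth 0 a j < nth 0 a m) (iota 0 m).
Proof. by move=> ms; rewrite (nth_map 0) ?size_iota // nth_iota. Qed.

Lemma nth_delta_inA a m : inA a -> m < size a ->
  nth 0 (delta a) m = nth 0 a m + count (fun j => nth 0 a j < nth 0 a m)
                                        (iota (nth 0 a m) (m - nth 0 a m)).
Proof.
case=> _ HA ms; have am_le := HA m ms.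
rewrite nth_delta // -[X in iota 0 X](subnKC am_le) iotaD count_cat; congr (_ + _).
rewrite -[RHS](size_iota 0) -count_predT.
apply: eq_in_count => j; rewrite mem_iota add0n => /andP[_ j_lt].
have js : j < size a by lia.
by have := HA j js; rewrite /predT /=; lia.
Qed.

Lemma nth_delta_leqif a m : inA a -> m < size a ->
  nth 0 a m <= nth 0 (delta a) m ?= iff good_at a m.
Proof.
move=> HA ms; rewrite nth_delta_inA //.
set s := iota _ _; set c := count _ s.
have -> : good_at a m = (c == 0).
  rewrite /good_at -/s -[all _ s]negbK -has_predC has_count -leqNgt leqn0.
  by congr (_ == 0); apply: eq_count => j /=; rewrite -ltnNge.
by split; [rewrite leq_addr | rewrite -{1}(addn0 (nth 0 a m)) eqn_add2l eq_sym].
Qed.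

Section LeqifNth.

Variables (a b : seq nat) (P : pred nat).
Hypothesis size_ab : size a = size b.
Hypothesis le_ab : forall m, m < size a -> nth 0 a m <= nth 0 b m ?= iff P m.

Lemma eq_from_leqif : all P (iota 0 (size a)) -> a = b.
Proof.
move=> /allP allP_a; apply: (@eq_from_nth _ 0 _ _ size_ab) => m ms.
by apply/eqP; rewrite (le_ab ms).2 allP_a // mem_iota.
Qed.

Lemma lex_lt_from_leqif : ~~ all P (iota 0 (size a)) -> lex_lt a b.
Proof.
case/allPn => m0; rewrite mem_iota add0n => /andP[_ m0s] notP0.
have ex_bad : exists m, (m < size a) && ~~ P m by exists m0; rewrite m0s.
case: (ex_minnP ex_bad) => m /andP[ms notPm] m_min.
split=> //; exists m; split=> //; split; last by rewrite (ltn_leqif (le_ab ms)).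
move=> j jm; have js : j < size a by apply: ltn_trans ms.
apply/eqP; rewrite (le_ab js).2; apply: contraTT jm => notPj.
by rewrite -leqNgt m_min // js.
Qed.

End LeqifNth.

Lemma mem_take_sorted (L : seq nat) i v : sorted ltn L -> i < size L ->
  (v \in take i.+1 L) = (v \in L) && (v <= nth 0 L i).
Proof.
move=> sL iL; have sL' : sorted leq L by move: sL; rewrite ltn_sorted_uniq_leq => /andP[].
apply/idP/andP => [vt | [/(nthP 0)[j jL <-] vle]].
- split; first exact: mem_take vt.
  case/(nthP 0): vt => j; rewrite size_take_min => jlt <-.
  rewrite nth_take; last by lia.
  by apply: (sorted_leq_nth leq_trans leqnn 0 sL'); rewrite ?inE //; lia.
- have ji : j <= i.
    rewrite leqNgt; apply/negP => ij.
    by have := sorted_ltn_nth ltn_trans 0 sL i j iL jL ij; rewrite ltnNge vle.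
  apply/(nthP 0); exists j; first by rewrite size_take_min; lia.
  by rewrite nth_take //; lia.
Qed.

Lemma good_at_rcons a t m : m < size a -> good_at (rcons a t) m = good_at a m.
Proof.
move=> ms; rewrite /good_at nth_rcons ms; apply: eq_in_all => j.
by rewrite mem_iota => /andP[j_ge jm]; rewrite nth_rcons (_ : j < size a) //; lia.
Qed.

Definition appendable (a : seq nat) t : bool :=
  (t <= size a) && good_at (rcons a t) (size a).

Lemma appendableP a t :
  reflect (t <= size a /\ forall j, t <= j -> j < size a -> t <= nth 0 a j)
          (appendable a t).
Proof.
apply: (iffP andP) => -[t_le H]; split=> //.
- move=> j h1 h2; move/good_atP: H; rewrite nth_rcons ltnn eqxx => /(_ j h1 h2).
  by rewrite nth_rcons h2.
- apply/good_atP; rewrite nth_rcons ltnn eqxx => j h1 h2.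
  by rewrite nth_rcons h2; apply: H.
Qed.

Lemma appendable_rcons a x t :
  appendable (rcons a x) t = (t == (size a).+1) || appendable a t && (t <= x).
Proof.
apply/appendableP/orP; rewrite size_rcons.
- case=> t_le H; case: (ltnP t (size a).+1) => [t_lt | t_ge]; last by left; lia.
  right; apply/andP; split.
  + apply/appendableP; split=> [|j h1 h2]; first by lia.
    by have := H j h1 (ltnW h2); rewrite nth_rcons h2.
  + by have := H (size a) (t_lt) (ltnSn _); rewrite nth_rcons ltnn eqxx.
- case=> [/eqP-> | /andP[/appendableP[t_le H] t_x]]; first by split=> // j; lia.
  split=> [|j h1 h2]; first by lia.
  rewrite nth_rcons; case: ltnP => [|j_ge]; first exact: H.
  by rewrite (_ : j == size a) //; lia.
Qed.

Definition parent (a : seq nat) := take (size a).-1 a.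

Lemma parent_rcons a t : parent (rcons a t) = a.
Proof. by rewrite /parent size_rcons -cats1 take_size_cat. Qed.

Definition sibling_inv (a L : seq nat) :=
  [/\ 0 < size a, sorted ltn L, last 0 a \in L & L =i appendable (parent a)].

Lemma mem_children a L i t : sibling_inv a L -> i < size L ->
  last 0 a = nth 0 L i ->
  (t \in rcons (take i.+1 L) (size a)) = appendable a t.
Proof.
case/lastP: a => [|a x] [//= _ sL _ memL] iL; rewrite last_rcons => xi.
rewrite appendable_rcons size_rcons mem_rcons in_cons mem_take_sorted // -xi.
by rewrite memL parent_rcons.
Qed.

Lemma CatL_sibling_inv a L : CatL a L -> sibling_inv a L.
Proof.
elim=> {a L} [|a L i t _ IH iL ela tin].
  by split=> // v; rewrite /appendable /good_at /= inE; case: v.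
have [a_gt0 sL _ memL] := IH.
split; [by rewrite size_rcons | | by rewrite last_rcons |].
- rewrite (sorted_pairwise ltn_trans) pairwise_rcons -(sorted_pairwise ltn_trans).
  rewrite take_sorted // andbT.
  apply/allP => v /mem_take; rewrite memL => /andP[+ _].
  by rewrite /parent size_takel ?leq_pred //; lia.
- by move=> v; rewrite parent_rcons; apply: mem_children.
Qed.

Lemma all_good_rcons a t :
  all (good_at (rcons a t)) (iota 0 (size (rcons a t))) =
  all (good_at a) (iota 0 (size a)) && good_at (rcons a t) (size a).
Proof.
rewrite size_rcons -addn1 iotaD all_cat /= andbT; congr (_ && _).
by apply: eq_in_all => m; rewrite mem_iota => /andP[_ ms]; apply: good_at_rcons.
Qed.

Lemma CatL_all_good a L : CatL a L -> all (good_at a) (iota 0 (size a)).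
Proof.
elim=> {a L} [//|a L i t HC IH iL ela tin].
rewrite all_good_rcons IH /=.
by move: tin; rewrite (mem_children _ (CatL_sibling_inv HC) iL ela) => /andP[].
Qed.

Lemma inA_rcons a t : 0 < size a -> inA (rcons a t) -> inA a.
Proof.
move=> a_gt0 [_ HA]; split=> // i ia.
by have := HA i; rewrite size_rcons nth_rcons ia; apply; apply: ltnW.
Qed.

Lemma all_good_inC a : inA a -> all (good_at a) (iota 0 (size a)) -> inC a.
Proof.
elim/last_ind: a => [[//]|a t IH] HA; rewrite all_good_rcons => /andP[good_a good_t].
have t_le : t <= size a.
  by have := HA.2 (size a); rewrite size_rcons nth_rcons ltnn eqxx; apply.
case: (posnP (size a)) => [/size0nil a_nil | a_gt0].
  by exists [:: 0]; move: t_le; rewrite a_nil leqn0 => /eqP->; apply: CatL0.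
have [L HC] := IH (inA_rcons a_gt0 HA) good_a.
have inv := CatL_sibling_inv HC; have [_ _ lastL _] := inv.
exists (rcons (take (index (last 0 a) L).+1 L) (size a)).
apply: CatLS HC _ _ _; rewrite ?index_mem ?nth_index //.
by rewrite (mem_children _ inv) ?index_mem ?nth_index // /appendable t_le.
Qed.

Lemma inC_all_good a : inA a -> inC a <-> all (good_at a) (iota 0 (size a)).
Proof. by move=> HA; split=> [[L /CatL_all_good] | /(all_good_inC HA)]. Qed.

Theorem mainTheorem2 (a : seq nat) :
  inA a -> (inC a -> delta a = a) /\ (~ inC a -> lex_lt a (delta a)).
Proof.
move=> HA; have size_a := esym (size_delta a).
have le_delta := fun m (ms : m < size a) => nth_delta_leqif HA ms.
split=> [/(inC_all_good HA) good_a | not_inC].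
- by symmetry; apply: (eq_from_leqif size_a le_delta).
- apply: (lex_lt_from_leqif size_a le_delta).
  by apply/negP => /(inC_all_good HA).
Qed.
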